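(* Let $\iota:\Lambda\hookrightarrow\widetilde{\Lambda}$ be a primitive isometric embedding of the $K3^{[n]}$-lattice into the Mukai lattice, $v$ a generator of $\iota(\Lambda)^\perp$, $\alpha\in\Lambda$ primitive isotropic, $\beta:=\iota(\alpha)$, and $\gamma\in\widetilde{\Lambda}$ with $(\gamma,\beta)=-1$ and $(\gamma,\gamma)=0$. Let $\Lambda_{k3}:=\beta^\perp/\mathbb{Z}\beta$ and let $h$ send an isometry of $\widetilde{\Lambda}$ fixing $\beta$ and $v$ to the induced isometry of $\Lambda_{k3}$. For $z\in\widetilde{\Lambda}$ orthogonal to $\beta$ and $v$ define $\tilde g_z(x):=x-(x,\beta)z+\left[(x,z)-\tfrac12(x,\beta)(z,z)\right]\beta$. Then $\tilde g_z$ is the unique isometry of $\widetilde{\Lambda}$ fixing $\beta$ and $v$, lying in the kernel of $h$, and sending $\gamma$ to an element congruent to $\gamma+z$ modulo $\mathbb{Z}\beta$. Moreover $\tilde g_z$ is orientation preserving.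
   Context: The Mukai lattice $\widetilde{\Lambda}$ is $E_8(-1)^{\oplus2}\oplus U^{\oplus4}$ (even unimodular of signature $(4,20)$); the $K3^{[n]}$-lattice $\Lambda$ ($n\ge2$) is $U^{\oplus3}\oplus E_8(-1)^{\oplus2}\oplus\langle2-2n\rangle$. An isometry is orientation preserving if it preserves the orientation of the positive cone $\{x\in\widetilde{\Lambda}\otimes\mathbb{R}:(x,x)>0\}$, i.e. acts trivially on its $H^2\cong\mathbb{Z}$. *)

(* Lattices are modelled concretely as integer row vectors
   with an explicit Gram matrix. *)
From HB Require Import structures.
From mathcomp Require Import all_boot all_order all_algebra.
From mathcomp Require Import Rstruct.
Set Implicit Arguments. Unset Strict Implicit. Unset Printing Implicit Defensive.
Import Order.TTheory GRing.Theory Num.Theory.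
Local Open Scope ring_scope.

(* Cartan matrix of E8 (Bourbaki numbering, 0-indexed); E8(-1) is its negative *)
Definition e8_edge (i j : nat) : bool :=
  [|| (i, j) == (0, 2)%N, (i, j) == (2, 3)%N, (i, j) == (3, 4)%N,
      (i, j) == (4, 5)%N, (i, j) == (5, 6)%N, (i, j) == (6, 7)%N
    | (i, j) == (1, 3)%N].
Definition e8 (i j : nat) : int :=
  if (i == j)%N then 2 else if e8_edge i j || e8_edge j i then -1 else 0.
(* hyperbolic plane U, blocks {2k, 2k+1} *)
Definition u_entry (i j : nat) : int :=
  if ((i != j) && (i./2 == j./2))%N then 1 else 0.

(* Mukai lattice  E8(-1)^2 + U^4  on Z^24 *)
Definition mukai_entry (i j : nat) : int :=
  if ((i < 8) && (j < 8))%N then - e8 i j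
  else if ((8 <= i < 16) && (8 <= j < 16))%N then - e8 (i - 8)%N (j - 8)%N
  else if ((16 <= i) && (16 <= j))%N then u_entry (i - 16)%N (j - 16)%N
  else 0.
Definition mukaiG : 'M[int]_24 := \matrix_(i, j) mukai_entry i j.

(* K3^[n] lattice  U^3 + E8(-1)^2 + <2-2n>  on Z^23 *)
Definition k3n_entry (n i j : nat) : int :=
  if ((i < 6) && (j < 6))%N then u_entry i j
  else if ((6 <= i < 14) && (6 <= j < 14))%N then - e8 (i - 6)%N (j - 6)%N
  else if ((14 <= i < 22) && (14 <= j < 22))%N then - e8 (i - 14)%N (j - 14)%N
  else if ((i == 22) && (j == 22))%N then 2%:Z - 2%:Z * n%:Z
  else 0.
Definition k3nG (n : nat) : 'M[int]_23 := \matrix_(i, j) k3n_entry n i j.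

Definition lform {m : nat} (G : 'M[int]_m) (x y : 'rV[int]_m) : int :=
  (x *m G *m y^T) 0 0.

Definition mukai := 'rV[int]_24.
Definition mform (x y : mukai) : int := lform mukaiG x y.

Definition isometric_embedding (n : nat) (iota : 'M[int]_(23, 24)) : Prop :=
  forall x y : 'rV[int]_23, mform (x *m iota) (y *m iota) = lform (k3nG n) x y.
Definition primitive_embedding (iota : 'M[int]_(23, 24)) : Prop :=
  forall (y : mukai) (k : int), k != 0 ->
    (exists x, k *: y = x *m iota) -> exists x, y = x *m iota.

Definition generates_perp (iota : 'M[int]_(23, 24)) (v : mukai) : Prop :=
  forall w : mukai, (forall x, mform w (x *m iota) = 0) <-> exists k : int, w = k *: v.

Definition primitive_vec {m : nat} (a : 'rV[int]_m) : Prop :=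
  a != 0 /\ forall (k : int) (y : 'rV[int]_m), a = k *: y -> `|k| = 1.

Definition is_isometry (g : mukai -> mukai) : Prop :=
  (forall x y, g (x + y) = g x + g y) /\ bijective g /\
  (forall x y, mform (g x) (g y) = mform x y).

(* g lies in the kernel of h : the induced isometry of beta^perp / Z beta is the identity *)
Definition in_ker_h (beta : mukai) (g : mukai -> mukai) : Prop :=
  forall x, mform x beta = 0 -> exists k : int, g x = x + k *: beta.

(* tilde g_z ; (z,z) is even so the division by 2 is exact *)
Definition gtilde (beta z : mukai) (x : mukai) : mukai :=
  x - mform x beta *: z
    + (mform x z - mform x beta * (mform z z %/ 2)%Z) *: beta.

(* matrix of an additive map (rows = images of the standard basis) *)
Definition mat_of (g : mukai -> mukai) : 'M[int]_24 :=
  \matrix_(i < 24) g (delta_mx 0 i).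

(* orientation of positive 4-planes in Mukai lattice (x) R *)
Definition pos_def {R : realFieldType} {k : nat} (P : 'M[R]_k) : Prop :=
  forall u : 'rV[R]_k, u != 0 -> 0 < (u *m P *m u^T) 0 0.
Definition orientation_preserving_over (R : realFieldType) (g : mukai -> mukai) : Prop :=
  let GR := map_mx intr mukaiG : 'M[R]_24 in
  let MR := map_mx intr (mat_of g) : 'M[R]_24 in
  forall B : 'M[R]_(4, 24), pos_def (B *m GR *m B^T) ->
    0 < \det (B *m MR *m GR *m B^T).
Definition orientation_preserving (g : mukai -> mukai) : Prop :=
  orientation_preserving_over Rdefinitions.R g.

(* gtilde_z preserves the form because z is orthogonal to the isotropic vector
   beta, and gtilde_(-z) inverts it.  An isometry acting trivially on
   beta^perp / Z beta is determined by its value on gamma, because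
   x + (x, beta) gamma lies in beta^perp for every x.
   For orientation, let the rows of B span a positive 4-plane with Gram matrix A.
   The pairing between gtilde(B) and B is A plus a rank-two correction, so its
   determinant is det A * (1 + p q - r^2 - c p), where p, q, r are the
   A^-1-products of the projections u, w of beta, z and (z, z) = 2c.  As the
   lattice has only four positive directions, no vector has norm exceeding that
   of its projection onto the plane; applied to p z - r beta, together with
   Cauchy-Schwarz, this makes the second factor positive. *)

From mathcomp Require Import all_boot all_order all_algebra.
From mathcomp Require Import ring lra zify.
Set Implicit Arguments.
Unset Strict Implicit.
Unset Printing Implicit Defensive.

Import Order.TTheory GRing.Theory Num.Theory.
Local Open Scope ring_scope.

Section BilinearForm.

Variables (R : comPzRingType) (m : nat) (G : 'M[R]_m).

Definition bform (x y : 'rV[R]_m) : R := (x *m G *m y^T) 0 0.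

Lemma bformDl x y w : bform (x + y) w = bform x w + bform y w.
Proof. by rewrite /bform !mulmxDl mxE. Qed.
Lemma bformZl k x w : bform (k *: x) w = k * bform x w.
Proof. by rewrite /bform -!scalemxAl mxE. Qed.
Lemma bformNl x w : bform (- x) w = - bform x w.
Proof. by rewrite -scaleN1r bformZl mulN1r. Qed.
Lemma bformBl x y w : bform (x - y) w = bform x w - bform y w.
Proof. by rewrite bformDl bformNl. Qed.
Lemma bformDr x y w : bform w (x + y) = bform w x + bform w y.
Proof. by rewrite /bform linearD /= !mulmxDr mxE. Qed.
Lemma bformZr k x w : bform w (k *: x) = k * bform w x.
Proof. by rewrite /bform linearZ /= -!scalemxAr mxE. Qed.
Lemma bformNr x w : bform w (- x) = - bform w x.
Proof. by rewrite -scaleN1r bformZr mulN1r. Qed.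
Lemma bformBr x y w : bform w (x - y) = bform w x - bform w y.
Proof. by rewrite bformDr bformNr. Qed.
Lemma bform0l w : bform 0 w = 0.
Proof. by rewrite /bform !mul0mx mxE. Qed.

Lemma bform_sym x y : G^T = G -> bform x y = bform y x.
Proof.
move=> Gsym; have tr11 (M : 'M[R]_1) : M 0 0 = M^T 0 0 by rewrite mxE.
by rewrite /bform tr11 !trmx_mul trmxK Gsym mulmxA.
Qed.

End BilinearForm.

Lemma all_iota24 (P : nat -> nat -> bool) :
  all (fun i => all (P i) (iota 0 24)) (iota 0 24) -> forall i j : 'I_24, P i j.
Proof.
move=> /allP rows i j.
have mem (k : 'I_24) : val k \in iota 0 24 by rewrite mem_iota ltn_ord.
by have /allP := rows _ (mem i); apply; apply: mem.
Qed.

Lemma mukaiG_sym : mukaiG^T = mukaiG.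
Proof.
apply/matrixP => i j; rewrite !mxE; apply/eqP.
by apply: (@all_iota24 (fun i j => mukai_entry j i == mukai_entry i j)); vm_compute.
Qed.

Lemma bform_addtr (R : comPzRingType) m (H : 'M[R]_m) x :
  bform (H + H^T) x x = bform H x x * 2.
Proof.
have tr11 (M : 'M[R]_1) : M 0 0 = M^T 0 0 by rewrite mxE.
rewrite /bform mulmxDr mulmxDl mxE [X in _ + X]tr11.
by rewrite !trmx_mul !trmxK mulmxA -mulr2n mulr_natr.
Qed.

Definition mukaiH : 'M[int]_24 :=
  \matrix_(i, j) if (i < j)%N then mukai_entry i j
                 else if i == j then (mukai_entry i i %/ 2)%Z else 0.

Lemma mukaiG_split : mukaiG = mukaiH + mukaiH^T.
Proof.
apply/matrixP => i j; rewrite !mxE; apply/eqP.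
apply: (@all_iota24 (fun i j => mukai_entry i j ==
  (if (i < j)%N then mukai_entry i j
   else if i == j then (mukai_entry i i %/ 2)%Z else 0) +
  (if (j < i)%N then mukai_entry j i
   else if j == i then (mukai_entry j j %/ 2)%Z else 0))).
by vm_compute.
Qed.

Lemma mform_sym x y : mform x y = mform y x.
Proof. exact: bform_sym mukaiG_sym. Qed.

Definition half_norm (z : mukai) : int := (mform z z %/ 2)%Z.

Lemma mform_half_norm z : mform z z = half_norm z * 2.
Proof.
by rewrite /half_norm -[mform z z]/(bform mukaiG z z) mukaiG_split bform_addtr mulzK.
Qed.

Lemma mformDl x y w : mform (x + y) w = mform x w + mform y w.
Proof. exact: bformDl. Qed.
Lemma mformNl x w : mform (- x) w = - mform x w.
Proof. exact: bformNl. Qed.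
Lemma mformZl k x w : mform (k *: x) w = k * mform x w.
Proof. exact: bformZl. Qed.
Lemma mformDr x y w : mform w (x + y) = mform w x + mform w y.
Proof. exact: bformDr. Qed.
Lemma mformZr k x w : mform w (k *: x) = k * mform w x.
Proof. exact: bformZr. Qed.
Lemma mformNr x w : mform w (- x) = - mform w x.
Proof. exact: bformNr. Qed.

Definition mformE := (mformDl, mformNl, mformZl, mformDr, mformNr, mformZr).

Lemma gtildeE b z x :
  gtilde b z x = x - mform x b *: z + (mform x z - mform x b * half_norm z) *: b.
Proof. by []. Qed.

Lemma gtildeD b z x y : gtilde b z (x + y) = gtilde b z x + gtilde b z y.
Proof. by rewrite !gtildeE !mformDl; apply/rowP => i; rewrite !mxE; ring. Qed.

Section GtildeIsometry.

Variables b z : mukai.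
Hypotheses (bb : mform b b = 0) (zb : mform z b = 0).

Lemma mform_gtilde_b x : mform (gtilde b z x) b = mform x b.
Proof. by rewrite gtildeE !mformE bb zb; ring. Qed.

Lemma mform_gtilde_z x :
  mform (gtilde b z x) z = mform x z - mform x b * mform z z.
Proof.
by rewrite gtildeE !mformE mform_half_norm (mform_sym b z) zb; ring.
Qed.

Lemma mform_gtilde x y : mform (gtilde b z x) (gtilde b z y) = mform x y.
Proof.
rewrite !gtildeE !mformE -/(half_norm z) mform_half_norm bb zb (mform_sym b z) zb.
by rewrite (mform_sym z y) (mform_sym b y); ring.
Qed.

Lemma half_normN w : half_norm (- w) = half_norm w.
Proof. by rewrite /half_norm mformNr mformNl opprK. Qed.

Lemma gtildeK x : gtilde b (- z) (gtilde b z x) = x.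
Proof.
rewrite [in LHS]gtildeE mform_gtilde_b mformNr mform_gtilde_z half_normN.
rewrite gtildeE mform_half_norm; apply/rowP => i; rewrite !mxE; ring.
Qed.

End GtildeIsometry.

Lemma gtilde_isometry b z :
  mform b b = 0 -> mform z b = 0 -> is_isometry (gtilde b z).
Proof.
move=> bb zb; have nzb : mform (- z) b = 0 by rewrite mformNl zb oppr0.
split; [exact: gtildeD | split; last exact: mform_gtilde].
exists (gtilde b (- z)) => x; first exact: gtildeK.
by rewrite -[in gtilde b z](opprK z) gtildeK.
Qed.

Lemma gtilde_perp b z x : mform x b = 0 -> gtilde b z x = x + mform x z *: b.
Proof. by move=> xb; rewrite gtildeE xb scale0r subr0 mul0r subr0. Qed.

Lemma gtilde_gamma b z gam : mform gam b = -1 ->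
  gtilde b z gam = gam + z + (mform gam z + half_norm z) *: b.
Proof. by move=> gb; rewrite gtildeE gb scaleN1r opprK mulN1r opprK. Qed.

Lemma additive_mulrz (V W : zmodType) (g : V -> W) :
  {morph g : x y / x + y} -> forall x k, g (x *~ k) = g x *~ k.
Proof.
move=> gD.
have g0 : g 0 = 0 by apply: (addrI (g 0)); rewrite -gD !addr0.
have gN x : g (- x) = - g x by apply/eqP; rewrite -addr_eq0 -gD addNr g0.
have gMn x n : g (x *+ n) = g x *+ n.
  by elim: n => [|n IHn]; rewrite ?mulr0n ?g0 // !mulrS gD IHn.
by move=> x [] n; rewrite ?NegzE ?mulrNz -pmulrn ?gN gMn.
Qed.

Lemma gtilde_unique b z gam (g : mukai -> mukai) :
  mform b b = 0 -> mform z b = 0 -> mform gam b = -1 -> mform gam gam = 0 ->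
  {morph g : x y / x + y} -> (forall x y, mform (g x) (g y) = mform x y) ->
  in_ker_h b g -> (exists k : int, g gam = gam + z + k *: b) ->
  g =1 gtilde b z.
Proof.
move=> bb zb gb gg gD giso ker [k gk] x.
have gZ a w : g (a *: w) = a *: g w.
  by rewrite -[a in LHS]intz -[a in RHS]intz !scaler_int additive_mulrz.
have [a aE] : {a | a = mform x b} by exists (mform x b).
have [y yE] : {y | y = x + a *: gam} by exists (x + a *: gam).
have yb : mform y b = 0 by rewrite yE !mformE gb -aE; ring.
have [ky gy] := ker y yb.
have kE : k = mform gam z + half_norm z.
  have := giso gam gam; rewrite gk !mformE gg gb bb zb mform_half_norm.
  by rewrite (mform_sym b gam) gb (mform_sym b z) zb (mform_sym z gam); lia.
have kyE : ky = mform y z.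
  have := giso y gam; rewrite gy gk !mformE yb bb (mform_sym b gam) gb.
  by rewrite (mform_sym b z) zb; lia.
have xE : x = y - a *: gam by rewrite yE addrK.
rewrite [in LHS]xE -scaleNr gD gZ gy gk kE kyE gtildeE yE !mformE -aE.
by apply/rowP => i; rewrite !mxE; ring.
Qed.

(* 60 (x, x) = 30 sum_k (x_(2k) + x_(2k+1))^2 - sum_j d_j s_j(x)^2 : each U summand is
   ((a + b)^2 - (a - b)^2) / 2, and the E8 rows come from an LDL^T factorization of
   the Cartan matrix, scaled to clear denominators. *)
Definition mukaiT_entry (k i : nat) : int :=
  if ((i == 16 + 2 * k) || (i == 17 + 2 * k))%N then 1 else 0.

Definition e8_factor (r j : nat) : int :=
  match r, j with
  | 0, 0 => 2 | 0, 2 => -1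
  | 1, 1 => 2 | 1, 3 => -1
  | 2, 2 => 3 | 2, 3 => -2
  | 3, 3 => 5 | 3, 4 => -6
  | 4, 4 => 4 | 4, 5 => -5
  | 5, 5 => 3 | 5, 6 => -4
  | 6, 6 => 2 | 6, 7 => -3
  | 7, 7 => 1
  | _, _ => 0 end.

Definition mukaiS_entry (r i : nat) : int :=
  if (r < 8)%N then (if (i < 8)%N then e8_factor r i else 0)
  else if (r < 16)%N then
    (if (8 <= i < 16)%N then e8_factor (r - 8) (i - 8) else 0)
  else if (i == 16 + 2 * (r - 16))%N then 1
  else if (i == 17 + 2 * (r - 16))%N then -1 else 0.

Definition e8_weight (r : nat) : int :=
  match r with 2 => 10 | 3 => 2 | 4 => 3 | 5 => 5 | 6 => 10 | _ => 30 end.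

Definition mukaiD_entry (r : nat) : int :=
  if (r < 16)%N then e8_weight (r %% 8) else 30.

Definition mukaiT : 'M[int]_(4, 24) := \matrix_(k, i) mukaiT_entry k i.
Definition mukaiS : 'M[int]_(20, 24) := \matrix_(r, i) mukaiS_entry r i.
Definition mukaiD : 'rV[int]_20 := \row_r mukaiD_entry r.

Lemma mukaiD_entry_ge0 r : 0 <= mukaiD_entry r.
Proof.
rewrite /mukaiD_entry; case: ifP => _ //.
by case: (r %% 8)%N => [|[|[|[|[|[|[|]]]]]]].
Qed.

Lemma sum_iota (F : nat -> int) n :
  \sum_(i < n) F i = foldr (fun i acc => F i + acc) 0 (iota 0 n).
Proof. by rewrite -(big_mkord xpredT) unlock /reducebig /index_iota subn0. Qed.

Lemma mukaiG_decomp :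
  60 *: mukaiG = 30 *: (mukaiT^T *m mukaiT) - mukaiS^T *m diag_mx mukaiD *m mukaiS.
Proof.
rewrite mul_mx_diag; apply/matrixP => i j; rewrite !mxE.
under eq_bigr do rewrite !mxE.
under [X in _ = _ - X]eq_bigr do rewrite !mxE.
rewrite (sum_iota (fun k => mukaiT_entry k i * mukaiT_entry k j)).
rewrite (sum_iota (fun r => mukaiS_entry r i * mukaiD_entry r * mukaiS_entry r j)).
apply/eqP; move: i j; apply: (@all_iota24 (fun i j => 60 * mukai_entry i j ==
  30 * foldr (fun k acc => mukaiT_entry k i * mukaiT_entry k j + acc) 0 (iota 0 4) -
  foldr (fun r acc => mukaiS_entry r i * mukaiD_entry r * mukaiS_entry r j + acc)
    0 (iota 0 20))).
by vm_compute.
Qed.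

Lemma det1D_mulmxC (R : comPzRingType) m n (X : 'M[R]_(m, n)) (Y : 'M[R]_(n, m)) :
  \det (1%:M + X *m Y) = \det (1%:M + Y *m X).
Proof.
have E1 : block_mx 1%:M 0 (- Y) 1%:M *m block_mx 1%:M X 0 (1%:M + Y *m X) =
    block_mx (1%:M + X *m Y) X 0 1%:M *m block_mx 1%:M 0 (- Y) 1%:M.
  rewrite !mulmx_block !mul1mx !mul0mx !mulmx1 !mulmx0 !addr0 !add0r mulNmx mulmxN.
  by rewrite addrCA addNr addr0 addrK.
have := congr1 determinant E1.
by rewrite !det_mulmx !det_ublock !det_lblock !det1 !mul1r !mulr1.
Qed.

Lemma det_mx22 (R : comPzRingType) (K : 'M[R]_2) :
  \det K = K 0 0 * K 1 1 - K 0 1 * K 1 0.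
Proof.
rewrite (expand_det_row _ 0) !big_ord_recl big_ord0 /cofactor !det_mx11 !mxE /=.
have -> : lift (lift ord0 ord0) ord0 = 0 :> 'I_2 by apply/val_inj.
have -> : lift ord0 ord0 = 1 :> 'I_2 by apply/val_inj.
by rewrite addr0 expr0 expr1; ring.
Qed.

Section PositiveDefinite.

Variable R : realFieldType.

Lemma posdef_schur n (A : 'M[R]_(1 + n)) : A^T = A -> pos_def A ->
  exists2 al : R, 0 < al &
    exists2 S : 'M[R]_n, S^T = S /\ pos_def S & \det A = al * \det S.
Proof.
move=> Asym Apd.
pose a := ulsubmx A; pose b := ursubmx A; pose c := dlsubmx A; pose D := drsubmx A.
have AE : A = block_mx a b c D by rewrite submxK.
have cb : c = b^T by rewrite /c /b trmx_ursub Asym.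
have Dsym : D^T = D by rewrite /D trmx_drsub Asym.
pose al := a 0 0.
have aE : a = al%:M by exact: mx11_scalar.
have al_gt0 : 0 < al.
  pose u : 'rV[R]_(1 + n) := row_mx 1%:M 0.
  have unz : u != 0.
    apply/eqP => /(congr1 (fun M : 'rV[R]_(1 + n) => M 0 (lshift n 0))).
    by rewrite /u row_mxEl !mxE /= => /eqP; rewrite oner_eq0.
  have := Apd u unz.
  rewrite AE /u mul_row_block tr_row_mx mul_row_col !mul1mx !mul0mx !addr0.
  by rewrite trmx1 mulmx1 trmx0 mulmx0 addr0 aE mxE eqxx mulr1n.
have al_neq0 : al != 0 by rewrite gt_eqF.
exists al => //; exists (D - al^-1 *: (c *m b)); first split.
- by rewrite linearB /= linearZ /= trmx_mul Dsym cb trmxK.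
- move=> y ynz; pose s : 'rV[R]_1 := - (al^-1 *: (y *m c)).
  have unz : row_mx s y != 0.
    apply: contraNneq ynz => u0.
    by have := congr1 (@rsubmx R 1 1 n) u0; rewrite row_mxKr => ->; rewrite linear0.
  suff <- : row_mx s y *m A *m (row_mx s y)^T =
      y *m (D - al^-1 *: (c *m b)) *m y^T by apply: Apd.
  rewrite AE mul_row_block tr_row_mx mul_row_col.
  have -> : s *m a + y *m c = 0.
    by rewrite /s aE mul_mx_scalar scalerN scalerA mulfV // scale1r addNr.
  rewrite mul0mx add0r mulmxBr mulmxBl /s -!scalemxAr -!scalemxAl.
  by rewrite mulmxDl mulNmx -scalemxAl !mulmxA mulNmx -scalemxAl addrC.
- pose L : 'M[R]_(1 + n) := block_mx 1%:M 0 (- (al^-1 *: c)) 1%:M.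
  have LA : L *m A = block_mx a b 0 (D - al^-1 *: (c *m b)).
    rewrite AE /L mulmx_block !mul1mx !mul0mx !addr0.
    congr block_mx.
      by rewrite aE mul_mx_scalar scalerN scalerA mulfV // scale1r addNr.
    by rewrite addrC mulNmx -scalemxAl.
  have := congr1 determinant LA.
  by rewrite det_mulmx det_lblock !det1 !mul1r det_ublock det_mx11.
Qed.

Lemma posdef_det_gt0 n (A : 'M[R]_n) : A^T = A -> pos_def A -> 0 < \det A.
Proof.
elim: n A => [|n IH] A Asym Apd; first by rewrite det_mx00.
have [al al_gt0 [S [Ssym Spd] ->]] := @posdef_schur n A Asym Apd.
by rewrite mulr_gt0 ?IH.
Qed.

Variables (n : nat) (A : 'M[R]_n).
Hypotheses (Asym : A^T = A) (Apd : pos_def A).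

Lemma posdef_unitmx : A \in unitmx.
Proof. by rewrite unitmxE unitfE gt_eqF ?posdef_det_gt0. Qed.

Lemma bform_ge0 x : 0 <= bform A x x.
Proof. by have [->|/Apd/ltW] := eqVneq x 0; rewrite ?bform0l. Qed.

Lemma posdef_invmx : pos_def (invmx A).
Proof.
move=> s snz.
have sAnz : s *m invmx A != 0.
  by apply: contraNneq snz => sA0; rewrite -(mulmxKV posdef_unitmx s) sA0 mul0mx.
have := Apd sAnz; rewrite (mulmxKV posdef_unitmx) trmx_mul trmx_inv Asym.
by rewrite mulmxA.
Qed.

Lemma posdef_CauchySchwarz s t : bform A s t ^+ 2 <= bform A s s * bform A t t.
Proof.
have [->|tnz] := eqVneq t 0.
  by rewrite /bform trmx0 mulmx0 mxE expr0n /= !mul0mx [(0 : 'M[R]_1) 0 0]mxE mulr0.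
have tt_gt0 : 0 < bform A t t by exact: Apd.
have := bform_ge0 (bform A t t *: s - bform A s t *: t).
rewrite !(bformBl, bformBr, bformZl, bformZr) (bform_sym t s Asym) => h.
have : 0 <= bform A t t * (bform A t t * bform A s s - bform A s t ^+ 2) by nra.
by rewrite pmulr_rge0 // subr_ge0 mulrC.
Qed.

End PositiveDefinite.

Lemma det_addmx_mul (R : comUnitRingType) n k (A : 'M[R]_n) (U : 'M_(n, k))
    (V : 'M_(k, n)) : A \in unitmx ->
  \det (A + U *m V) = \det A * \det (1%:M + V *m invmx A *m U).
Proof.
move=> Aunit; have -> : A + U *m V = A *m (1%:M + invmx A *m U *m V).
  by rewrite mulmxDr mulmx1 !mulmxA mulmxV ?mul1mx.
by rewrite det_mulmx det1D_mulmxC mulmxA.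
Qed.

Lemma det_pairing_correction (R : comPzRingType) k (M : 'M[R]_k)
    (u w : 'rV[R]_k) c : M^T = M ->
  \det (1%:M + col_mx u w *m M *m row_mx (w - c *: u)^T (- u)^T) =
  1 + bform M u u * bform M w w - bform M u w ^+ 2 - c * bform M u u.
Proof.
move=> Msym.
have addE (N : 'M[R]_(1 + 1)) i j : (1%:M + N) i j = (i == j)%:R + N i j.
  by rewrite !mxE.
have i0 : (0 : 'I_(1 + 1)) = lshift 1 0 by apply/val_inj.
have i1 : (1 : 'I_(1 + 1)) = rshift 1 0 by apply/val_inj.
rewrite mul_col_mx mul_col_row det_mx22 !addE i0 i1.
rewrite !(block_mxEul, block_mxEur, block_mxEdl, block_mxEdr) /=.
rewrite -/(bform M u (w - c *: u)) -/(bform M w (- u)).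
rewrite -/(bform M u (- u)) -/(bform M w (w - c *: u)).
by rewrite !(bformBr, bformNr, bformZr) (bform_sym w u Msym); ring.
Qed.

Section PositiveIndex.

Variables (R : realFieldType) (m k : nat) (G : 'M[R]_m) (T : 'M[R]_(k, m)).
Hypothesis Gsym : G^T = G.
Hypothesis bform_le0_kerT : forall x, x *m T^T = 0 -> bform G x x <= 0.
Variable B : 'M[R]_(k, m).
Hypothesis Bpos : pos_def (B *m G *m B^T).

Local Notation A := (B *m G *m B^T).

Lemma gram_mx_sym : A^T = A.
Proof. by rewrite !trmx_mul trmxK Gsym mulmxA. Qed.

(* [col_mx B y *m T^T] has [k + 1] rows and [k] columns, so some nontrivial
   combination [x] of the rows of [B] and [y] is killed by [T^T]. *)
Lemma bform_le0_orthogonal y : y *m G *m B^T = 0 -> bform G y y <= 0.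
Proof.
move=> yB; rewrite leNgt; apply/negP => yy_gt0.
pose C : 'M[R]_(k + 1, m) := col_mx B y.
have /rowV0Pn[lam /sub_kermxP lamCT lam_neq0] : kermx (C *m T^T) != 0.
  rewrite kermx_eq0 /row_free; apply/negP => /eqP rk.
  by have := rank_leq_col (C *m T^T); rewrite rk addn1 ltnn.
pose x := lam *m C.
have := bform_le0_kerT (x := x); rewrite -mulmxA lamCT => /(_ erefl).
apply/negP; rewrite -ltNge.
pose mu := lsubmx lam; pose t := rsubmx lam.
have xE : x = mu *m B + t *m y by rewrite /x -[lam]hsubmxK mul_row_col.
have By : B *m G *m y^T = 0.
  by apply: trmx_inj; rewrite !trmx_mul trmxK Gsym mulmxA yB trmx0.
have tr11 (M : 'M[R]_1) : (t *m M *m t^T) 0 0 = t 0 0 ^+ 2 * M 0 0.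
  by rewrite !mxE big_ord1 mxE big_ord1 !mxE; ring.
have -> : bform G x x = bform A mu mu + t 0 0 ^+ 2 * bform G y y.
  have tyGB : t *m y *m G *m B^T = 0 by rewrite -!mulmxA [y *m _]mulmxA yB mulmx0.
  have muBGy : mu *m B *m G *m y^T = 0 by rewrite -!mulmxA [B *m _]mulmxA By mulmx0.
  rewrite /bform xE linearD /= !trmx_mul !(mulmxDl, mulmxDr) !mulmxA tyGB muBGy.
  by rewrite !mul0mx add0r addr0 -tr11 !mulmxA mxE.
have [mu0|mu_neq0] := eqVneq mu 0.
  have t_neq0 : t 0 0 != 0.
    apply: contra lam_neq0 => /eqP t0; rewrite -[lam]hsubmxK -/mu -/t mu0.
    have -> : t = 0 by apply/rowP => i; rewrite ord1 t0 mxE.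
    by rewrite row_mx0.
  rewrite mu0 bform0l add0r; apply: mulr_gt0 => //.
  by rewrite exprn_even_gt0.
by have := Bpos mu_neq0; rewrite -/(bform A mu mu); nra.
Qed.

Lemma bform_le_proj y :
  bform G y y <= bform (invmx A) (y *m G *m B^T) (y *m G *m B^T).
Proof.
have Aunit := posdef_unitmx gram_mx_sym Bpos.
set u := y *m G *m B^T; set Ai := invmx A.
pose Py := y - u *m Ai *m B.
have PyB : Py *m G *m B^T = 0.
  rewrite /Py !mulmxBl -/u.
  have -> : u *m Ai *m B *m G *m B^T = u *m Ai *m A by rewrite !mulmxA.
  by rewrite mulmxKV // subrr.
have uAiB_Py : bform G (u *m Ai *m B) Py = 0.
  have BPy : B *m G *m Py^T = 0.
    by apply: trmx_inj; rewrite !trmx_mul trmxK Gsym mulmxA PyB trmx0.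
  by rewrite /bform -!mulmxA (mulmxA B) BPy !mulmx0 mxE.
have y_uAiB : bform G y (u *m Ai *m B) = bform Ai u u.
  by rewrite /bform !trmx_mul trmx_inv gram_mx_sym !mulmxA.
have := bform_le0_orthogonal PyB.
by rewrite {1}/Py bformBl uAiB_Py subr0 bformBr y_uAiB subr_le0.
Qed.

Variables (b z : 'rV[R]_m) (c : R).
Hypotheses (bb : bform G b b = 0) (zb : bform G z b = 0) (zz : bform G z z = c * 2).

Lemma pairing_det_gt0 :
  0 < \det (B *m (1%:M - G *m b^T *m z + (G *m z^T - c *: (G *m b^T)) *m b) *m G *m B^T).
Proof.
have Aunit := posdef_unitmx gram_mx_sym Bpos.
have Aisym : (invmx A)^T = invmx A by rewrite trmx_inv gram_mx_sym.
set u := b *m G *m B^T; set w := z *m G *m B^T; set Ai := invmx A.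
have GBT x : B *m G *m x^T = (x *m G *m B^T)^T by rewrite !trmx_mul trmxK Gsym mulmxA.
have -> : B *m (1%:M - G *m b^T *m z + (G *m z^T - c *: (G *m b^T)) *m b) *m G *m B^T =
    A + row_mx (w - c *: u)^T (- u)^T *m col_mx u w.
  rewrite mul_row_col /u /w !linearB !linearN !linearZ /= !trmx_mul !trmxK Gsym.
  rewrite !(mulmxDr, mulmxDl, mulmxBr, mulmxBl, mulmxN, mulNmx, mulmx1).
  rewrite -!scalemxAl -!scalemxAr !mulmxA -!scalemxAl !(mulmxN, mulNmx, scalerN).
  by rewrite !mulmxA addrAC [RHS]addrA.
rewrite det_addmx_mul //; apply: mulr_gt0; first exact: posdef_det_gt0 gram_mx_sym Bpos.
pose p := bform Ai u u; pose q := bform Ai w w; pose r := bform Ai u w.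
have wu : bform Ai w u = r by rewrite /r bform_sym.
rewrite det_pairing_correction // -/p -/q -/r.
have Aipd := posdef_invmx gram_mx_sym Bpos.
have p_ge0 : 0 <= p := bform_ge0 Aipd u.
have rpq : r ^+ 2 <= p * q := posdef_CauchySchwarz Aisym Aipd u w.
have := bform_le_proj (p *: z - r *: b).
rewrite mulmxBl -!scalemxAl mulmxBl -!scalemxAl -/u -/w -/Ai.
rewrite !(bformBl, bformBr, bformZl, bformZr) zz bb zb (bform_sym b z Gsym) zb.
rewrite wu -/p -/q -/r => proj.
have [p0|p_gt0] := eqVneq p 0; first by move: rpq; rewrite p0; nra.
nra.
Qed.

End PositiveIndex.

Lemma bform_diag_ge0 (R : realFieldType) n (d y : 'rV[R]_n) :
  (forall j, 0 <= d 0 j) -> 0 <= bform (diag_mx d) y y.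
Proof.
move=> d_ge0; rewrite /bform mul_mx_diag mxE; apply: sumr_ge0 => j _.
by rewrite !mxE -mulrA mulrC -mulrA mulr_ge0 // -expr2 sqr_ge0.
Qed.

Section MukaiReal.

Variable R : realFieldType.
Local Notation GR := (map_mx (intr : int -> R) mukaiG).

Lemma mukaiGR_sym : GR^T = GR.
Proof. by rewrite map_trmx mukaiG_sym. Qed.

Lemma bform_mukaiGR x y :
  bform GR (map_mx intr x) (map_mx intr y) = (mform x y)%:~R.
Proof. by rewrite /bform map_trmx -!map_mxM mxE. Qed.

Lemma mukaiGR_le0_kerT (x : 'rV[R]_24) :
  x *m (map_mx intr mukaiT)^T = 0 -> bform GR x x <= 0.
Proof.
move=> xT; set S := map_mx (intr : int -> R) mukaiS.
have decomp := congr1 (map_mx (intr : int -> R)) mukaiG_decomp.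
rewrite map_mxZ map_mxB map_mxZ !map_mxM map_diag_mx -!map_trmx in decomp.
have DS_ge0 : 0 <= bform (S^T *m diag_mx (map_mx intr mukaiD) *m S) x x.
  have -> : bform (S^T *m diag_mx (map_mx intr mukaiD) *m S) x x =
      bform (diag_mx (map_mx intr mukaiD)) (x *m S^T) (x *m S^T).
    by rewrite /bform trmx_mul trmxK !mulmxA.
  by apply: bform_diag_ge0 => j; rewrite !mxE ler0z mukaiD_entry_ge0.
have TT0 : bform ((map_mx intr mukaiT)^T *m map_mx intr mukaiT) x x = 0.
  by rewrite /bform !mulmxA xT !mul0mx mxE.
have : bform ((60 : int)%:~R *: GR) x x =
    bform ((30 : int)%:~R *: ((map_mx intr mukaiT)^T *m map_mx intr mukaiT) -
      S^T *m diag_mx (map_mx intr mukaiD) *m S) x x by rewrite decomp.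
have bformMZ a M : bform (a *: M) x x = a * bform M x x.
  by rewrite /bform -scalemxAr -scalemxAl mxE.
have bformMB M N : bform (M - N) x x = bform M x x - bform N x x.
  by rewrite /bform mulmxBr mulmxBl !mxE.
by rewrite bformMB !bformMZ TT0; lra.
Qed.

End MukaiReal.

Lemma mat_of_gtilde b z : mat_of (gtilde b z) =
  1%:M - mukaiG *m b^T *m z + (mukaiG *m z^T - half_norm z *: (mukaiG *m b^T)) *m b.
Proof.
apply/row_matrixP => i; rewrite rowK rowE !mulmxDr mulmx1 mulmxN !mulmxA.
rewrite mulmxBr -scalemxAr !mulmxA gtildeE.
rewrite [delta_mx 0 i *m mukaiG *m b^T]mx11_scalar [delta_mx 0 i *m mukaiG *m z^T]mx11_scalar.
rewrite mulmxBl -scalemxAl !mul_scalar_mx scalerA /mform /lform.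
by rewrite [_ * half_norm z]mulrC scalerBl.
Qed.

Lemma gtilde_orientation_preserving_over (R : realFieldType) b z :
  mform b b = 0 -> mform z b = 0 -> orientation_preserving_over R (gtilde b z).
Proof.
move=> bb zb; rewrite /orientation_preserving_over /= => B Bpos.
rewrite mat_of_gtilde.
rewrite map_mxD map_mxB map_mx1 !map_mxM map_mxB map_mxZ !map_mxM -!map_trmx.
apply: (pairing_det_gt0 (mukaiGR_sym R) (@mukaiGR_le0_kerT R) Bpos).
- by rewrite bform_mukaiGR bb.
- by rewrite bform_mukaiGR zb.
- by rewrite bform_mukaiGR mform_half_norm intrM.
Qed.

Theorem lemma5p2 (n : nat) (iota : 'M[int]_(23, 24)) (v : mukai)
    (alpha : 'rV[int]_23) (gamma z : mukai) :
  (2 <= n)%N ->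
  isometric_embedding n iota -> primitive_embedding iota ->
  generates_perp iota v ->
  primitive_vec alpha -> lform (k3nG n) alpha alpha = 0 ->
  let beta := alpha *m iota in
  mform gamma beta = -1 -> mform gamma gamma = 0 ->
  mform z beta = 0 -> mform z v = 0 ->
  (is_isometry (gtilde beta z) /\
   gtilde beta z beta = beta /\ gtilde beta z v = v /\
   in_ker_h beta (gtilde beta z) /\
   (exists k : int, gtilde beta z gamma = gamma + z + k *: beta)) /\
  (forall g : mukai -> mukai, is_isometry g -> g beta = beta -> g v = v ->
     in_ker_h beta g -> (exists k : int, g gamma = gamma + z + k *: beta) ->
     forall x, g x = gtilde beta z x) /\
  orientation_preserving (gtilde beta z).
Proof.
move=> _ iso _ gen _ aa beta gb gg zb zv.
have bb : mform beta beta = 0 by rewrite /beta iso aa.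
have vb : mform v beta = 0 by apply: (gen v).2; exists 1; rewrite scale1r.
split; [split; [|split; [|split; [|split]]] | split].
- exact: gtilde_isometry.
- by rewrite gtilde_perp // (mform_sym beta) zb scale0r addr0.
- by rewrite gtilde_perp // (mform_sym v) zv scale0r addr0.
- by move=> x xb; exists (mform x z); apply: gtilde_perp.
- by exists (mform gamma z + half_norm z); apply: gtilde_gamma.
- by move=> g [gD [_ giso]] _ _; apply: gtilde_unique.
- exact: gtilde_orientation_preserving_over.
Qed.
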